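(* Let $a,r$ be positive integers with $r\ge 2$, let $a_n=ar^{n-1}+1$ for $n\ge 1$, and set $d=\gcd(a+1,r-1)$. (1) Suppose $d$ is odd. If $a+1$ does not divide $r-1$, then the sequence $(\Gamma(a_n,a_{n+1}))_{n\ge 1}$ is constant. If $a+1$ divides $r-1$, then $\Gamma(a_1,a_2)=1$ and $\Gamma(a_n,a_{n+1})=2$ for all $n\ge 2$. (2) If $d$ is even, then the sequence $(\Gamma(a_n,a_{n+1}))_{n\ge 2}$ alternates between $1$ and $2$.
   Context: For relatively prime positive integers $p,q$, exactly one of the equations $px+qy=\frac{(p-1)(q-1)}{2}$ (Equation 1) and $px+qy+1=\frac{(p-1)(q-1)}{2}$ (Equation 2) has a solution in nonnegative integers $(x,y)$. For positive integers $a,b$ with $d=\gcd(a,b)$, $\Gamma(a,b)=1$ if Equation 1 with $(p,q)=(a/d,b/d)$ has a nonnegative integer solution, and $\Gamma(a,b)=2$ otherwise. *)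

From mathcomp Require Import all_boot.
Set Implicit Arguments. Unset Strict Implicit. Unset Printing Implicit Defensive.

(* Equation 1 for coprime p q: p x + q y = (p-1)(q-1)/2 has a solution in
   nonnegative integers.  Any solution satisfies x, y <= (p-1)(q-1)/2, so the
   bounded boolean search is equivalent to the unbounded existential. *)
Definition eq1_solvable (p q : nat) : bool :=
  let N := ((p - 1) * (q - 1)) %/ 2 in
  [exists x : 'I_N.+1, exists y : 'I_N.+1, p * x + q * y == N].

Definition Gamma (a b : nat) : nat :=
  let d := gcdn a b in
  if eq1_solvable (a %/ d) (b %/ d) then 1 else 2.

Definition aseq (a r n : nat) : nat := a * r ^ (n - 1) + 1.

From mathcomp Require Import all_boot zify.

(* Let d = gcd(a + 1, r - 1) = gcd(a_n, a_(n+1)) and write a_n = d b_n, r = d k + 1, so that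
   b_(n+1) = r b_n - k and Gamma(a_n, a_(n+1)) is decided by Equation 1 for the coprime pair
   (b_n, r b_n - k).  Fix t < k with k | b_1 t + 1; then k | b_n t + 1 for every n, say
   b_n t + 1 = k m_n.  For a pair (p, r p - k) with p t + 1 = k m, the only possible solution
   of Equation 1 is x = (r m - t - 1)/2, y = (p - 1 - m)/2, so it is solvable iff p + m and
   r m + t are odd.  Passing from b_n to b_(n+1) replaces m_n by m_n + (d b_n - 1) t, which
   flips this parity condition when d is even and preserves it when d is odd. *)

Set Implicit Arguments.
Unset Strict Implicit.
Unset Printing Implicit Defensive.

Lemma coprime_pred_mul_even p q : coprime p q -> ~~ odd ((p - 1) * (q - 1)).
Proof.
move=> co_pq; rewrite oddM; apply/negP => /andP[odd_p1 odd_q1].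
have /andP[two_p two_q] : (2 %| p) && (2 %| q) by rewrite !dvdn2; lia.
by move: (dvdn_gcd 2 p q); rewrite (eqP co_pq) two_p two_q.
Qed.

(* Equation 1, doubled so that no truncated subtraction occurs. *)
Lemma eq1P p q : 0 < p -> 0 < q -> coprime p q ->
  reflect (exists x y, (p * x + q * y).*2 + p + q = p * q + 1) (eq1_solvable p q).
Proof.
move=> p_gt0 q_gt0 co_pq; rewrite /eq1_solvable.
set N := _ %/ 2.
have N2 : N.*2 + p + q = p * q + 1.
  have : (p - 1) * (q - 1) + p + q = p * q + 1 by nia.
  by rewrite -muln2 divnK // dvdn2 coprime_pred_mul_even.
apply: (iffP existsP) => [[x /existsP[y /eqP E]]|[x [y E]]].
  by exists x, y; rewrite E.
have {}E : p * x + q * y = N by lia.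
have x_lt : x < N.+1 by rewrite ltnS -E (leq_trans (leq_pmull x p_gt0)) ?leq_addr.
have y_lt : y < N.+1 by rewrite ltnS -E (leq_trans (leq_pmull y q_gt0)) ?leq_addl.
by exists (Ordinal x_lt); apply/existsP; exists (Ordinal y_lt); rewrite /= E.
Qed.

Lemma coprime_dvd_mul_addn1 p k t : k %| p * t + 1 -> coprime p k.
Proof.
move=> k_dvd; rewrite /coprime -dvdn1.
by have := dvdn_trans (dvdn_gcdr p k) k_dvd; rewrite dvdn_addr // dvdn_mulr ?dvdn_gcdl.
Qed.

Lemma coprime_mul_sub p r k : k <= r * p -> coprime p k -> coprime p (r * p - k).
Proof.
move=> k_le co_pk; set g := gcdn p (r * p - k).
have g_k : g %| k.
  have -> : k = r * p - (r * p - k) by lia.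
  by rewrite dvdn_sub ?dvdn_mull ?dvdn_gcdl ?dvdn_gcdr.
by rewrite /coprime -dvdn1 -(eqP co_pk) dvdn_gcd dvdn_gcdl g_k.
Qed.

Definition eq1_parity (r k t p : nat) : bool :=
  let m := (p * t + 1) %/ k in odd (p + m) && odd (r * m + t).

Lemma eq1_solvable_mul_sub p r k t : 1 < p -> k < r -> t < k -> k %| p * t + 1 ->
  eq1_solvable p (r * p - k) = eq1_parity r k t p.
Proof.
move=> p_gt1 k_lt_r t_lt_k k_dvd; rewrite /eq1_parity.
set m := _ %/ k; set q := r * p - k.
have ptm : p * t + 1 = k * m by rewrite /m [k * _]mulnC divnK.
have qk : q + k = r * p by rewrite subnK //; nia.
have m_lt_p : m < p by nia.
have t_lt_rm : t < r * m by nia.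
have co_pk := coprime_dvd_mul_addn1 k_dvd.
have co_pq : coprime p q by rewrite coprime_mul_sub //; nia.
have q_gt0 : 0 < q by nia.
apply/(eq1P (ltnW p_gt1) q_gt0 co_pq)/andP => [[x [y E]] | [odd_pm odd_rmt]].
-
  have p_dvd : p %| k * (y.*2 + m + 1).
    have eq_mod_p : k * (y.*2 + m + 1) + r * p * p = p * (x.*2 + r * y.*2 + k + r + t + 1).
      have := congr1 (muln y) qk; lia.
    by rewrite -(dvdn_addl _ (dvdn_mull (r * p) (dvdnn p))) eq_mod_p dvdn_mulr.
  have y2_lt : y.*2 < p.
    by rewrite -ltnS -(ltn_pmul2l q_gt0); lia.
  have y_eq : y.*2 + m + 1 = p.
    rewrite Gauss_dvdr // in p_dvd.
    by move: p_dvd => /dvdnP[[|[|c]] hc]; rewrite ?mul0n ?mul1n ?mulSn in hc; lia.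
  have x_eq : x.*2 + t + 1 = r * m.
    apply/eqP; rewrite -(eqn_pmul2l (ltnW p_gt1)); apply/eqP.
    have := congr1 (muln q) y_eq; have := congr1 (muln m) qk; lia.
  split; lia.
- have [x x_eq] : exists x, x.*2 + t + 1 = r * m by exists (r * m - t - 1)./2; lia.
  have [y y_eq] : exists y, y.*2 + m + 1 = p by exists (p - m - 1)./2; lia.
  exists x, y.
  have := congr1 (muln p) x_eq; have := congr1 (muln q) y_eq; have := congr1 (muln m) qk; lia.
Qed.

Lemma mul_sub_addn1 d r k p t : r = d * k + 1 -> 0 < d * p ->
  (r * p - k) * t + 1 = p * t + 1 + k * ((d * p - 1) * t).
Proof.
move=> -> dp_gt0; have -> : (d * k + 1) * p - k = p + k * (d * p - 1) by nia.
by rewrite mulnDl addnAC mulnA.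
Qed.

Lemma eq1_parity_mul_sub d r k t p : r = d * k + 1 -> 0 < d -> 0 < p -> k %| p * t + 1 ->
  eq1_parity r k t (r * p - k) = ~~ odd d (+) eq1_parity r k t p.
Proof.
move=> r_eq d_gt0 p_gt0 k_dvd; have dp_gt0 : 0 < d * p by rewrite muln_gt0 d_gt0.
have k_gt0 : 0 < k by move: k_dvd; case: k {r_eq} => //; rewrite dvd0n addn1.
rewrite /eq1_parity (mul_sub_addn1 t r_eq dp_gt0).
set m := (p * t + 1) %/ k.
have ptm : p * t + 1 = k * m by rewrite /m [k * _]mulnC divnK.
rewrite ptm -mulnDr mulKn //; have k_le : k <= r * p by rewrite r_eq; nia.
have := congr1 odd ptm.
rewrite r_eq in k_le *; rewrite !(oddD, oddM, oddB k_le, oddB dp_gt0) /=.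
by case: (odd d) (odd k) (odd p) (odd t) (odd m) => [] [] [] [] [].
Qed.

Lemma eq1_solvable1n q : eq1_solvable 1 q.
Proof.
rewrite /eq1_solvable /= subnn mul0n div0n.
by apply/existsP; exists ord0; apply/existsP; exists ord0; rewrite !muln0.
Qed.

Lemma Gamma_mul_coprime d p q : 0 < d -> coprime p q ->
  Gamma (d * p) (d * q) = if eq1_solvable p q then 1 else 2.
Proof. by move=> d_gt0 /eqP co_pq; rewrite /Gamma -muln_gcdr co_pq muln1 !mulKn. Qed.

Lemma aseq1 a r : aseq a r 1 = a + 1.
Proof. by rewrite /aseq subnn expn0 muln1. Qed.

Lemma aseqS a r n : 0 < r -> 0 < n -> aseq a r n.+1 = r * aseq a r n - (r - 1).
Proof.
move=> r_gt0 n_gt0; rewrite /aseq subSS subn0 -(prednK n_gt0) expnS subn1 /=.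
by nia.
Qed.

Section GeometricSequence.

Variables a r : nat.
Hypotheses (a_gt0 : 0 < a) (r_gt1 : 1 < r).

Local Notation d := (gcdn (a + 1) (r - 1)).
Local Notation k := ((r - 1) %/ d).
Local Notation b n := (aseq a r n %/ d).

Lemma gcd_aseq_gt0 : 0 < d.
Proof. by rewrite gcdn_gt0 addn1. Qed.

Lemma mul_gcd_ratio : d * k = r - 1.
Proof. by rewrite mulnC divnK ?dvdn_gcdr. Qed.

Lemma ratio_div_lt : k < r.
Proof.
by rewrite (leq_ltn_trans (leq_pmull _ gcd_aseq_gt0)) // mul_gcd_ratio subn1 ltn_predL ltnW.
Qed.

Lemma ratio_gcdE : r = d * k + 1.
Proof. by rewrite mul_gcd_ratio subnK // ltnW. Qed.

Lemma dvdn_gcd_aseq n : 0 < n -> d %| aseq a r n.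
Proof.
elim: n => [//|[_ _|n IHn _]]; first by rewrite aseq1 dvdn_gcdl.
by rewrite aseqS ?(ltnW r_gt1) //; apply: dvdn_sub; rewrite ?dvdn_mull ?IHn ?dvdn_gcdr.
Qed.

Lemma aseq_divE n : 0 < n -> aseq a r n = d * b n.
Proof. by move=> n_gt0; rewrite mulnC divnK ?dvdn_gcd_aseq. Qed.

Lemma aseq_divS n : 0 < n -> b n.+1 = r * b n - k.
Proof.
move=> n_gt0; apply/eqP; rewrite -(eqn_pmul2l gcd_aseq_gt0) -aseq_divE //.
by rewrite mulnBr mulnCA -aseq_divE // mul_gcd_ratio aseqS ?(ltnW r_gt1).
Qed.

Lemma aseq_div_gt0 n : 0 < n -> 0 < b n.
Proof.
by move=> n_gt0; rewrite -(ltn_pmul2l gcd_aseq_gt0) muln0 -aseq_divE // /aseq addn1.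
Qed.

Lemma aseq_div_gt1 n : 1 < n -> 1 < b n.
Proof.
move=> n_gt1; rewrite -(ltn_pmul2l gcd_aseq_gt0) muln1 -aseq_divE ?(ltnW n_gt1) //.
have d_le : d <= r - 1 by rewrite dvdn_leq ?dvdn_gcdr // subn_gt0.
have r_le : r <= r ^ (n - 1) by rewrite -{1}(expn1 r) leq_pexp2l ?(ltnW r_gt1) // subn_gt0.
rewrite /aseq; nia.
Qed.

Lemma aseq_div1_eq1 : (b 1 == 1) = (a + 1 %| r - 1).
Proof.
rewrite aseq1 eq_sym eqn_div ?gcd_aseq_gt0 ?dvdn_gcdl // mul1n eq_sym.
by apply/eqP/gcdn_idPl.
Qed.

Lemma aseq_inverse_exists : exists2 t, t < k & k %| b 1 * t + 1.
Proof.
have k_gt0 : 0 < k by rewrite divn_gt0 ?gcd_aseq_gt0 // dvdn_leq ?dvdn_gcdr // subn_gt0.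
have co_kb : gcdn k (b 1) = 1.
  apply/eqP; rewrite -(eqn_pmul2r gcd_aseq_gt0) mul1n muln_gcdl.
  by rewrite !divnK ?dvdn_gcdr ?dvdn_gcd_aseq // aseq1 gcdnC.
have [t t_lt_k] := Bezoutl (b 1) k_gt0; rewrite co_kb => k_dvd.
by exists t => //; rewrite [b 1 * t + 1]addnC [b 1 * t]mulnC.
Qed.

Section Inverse.

Variable t : nat.
Hypotheses (t_lt_k : t < k) (k_dvd : k %| b 1 * t + 1).

Lemma dvdn_aseq_div_inverse n : 0 < n -> k %| b n * t + 1.
Proof.
elim: n => // [[|n IHn _]] //.
rewrite aseq_divS // (mul_sub_addn1 t ratio_gcdE) ?muln_gt0 ?gcd_aseq_gt0 ?aseq_div_gt0 //.
by rewrite dvdn_add ?dvdn_mulr ?IHn.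
Qed.

Lemma Gamma_aseq n : 0 < n ->
  Gamma (aseq a r n) (aseq a r n.+1) = if eq1_solvable (b n) (b n.+1) then 1 else 2.
Proof.
move=> n_gt0; rewrite {1}(aseq_divE n_gt0) {1}(aseq_divE (ltn0Sn n)).
rewrite Gamma_mul_coprime ?gcd_aseq_gt0 // aseq_divS //; apply: coprime_mul_sub.
  by rewrite (leq_trans (ltnW ratio_div_lt)) ?leq_pmulr ?aseq_div_gt0.
exact: coprime_dvd_mul_addn1 (dvdn_aseq_div_inverse n_gt0).
Qed.

Lemma Gamma_aseq_parity n : 0 < n -> 1 < b n ->
  Gamma (aseq a r n) (aseq a r n.+1) = if eq1_parity r k t (b n) then 1 else 2.
Proof.
move=> n_gt0 bn_gt1; rewrite Gamma_aseq // aseq_divS //.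
by rewrite (eq1_solvable_mul_sub bn_gt1 ratio_div_lt t_lt_k (dvdn_aseq_div_inverse n_gt0)).
Qed.

Lemma eq1_parity_aseqS n : 0 < n ->
  eq1_parity r k t (b n.+1) = ~~ odd d (+) eq1_parity r k t (b n).
Proof.
move=> n_gt0; rewrite aseq_divS // (eq1_parity_mul_sub ratio_gcdE) ?gcd_aseq_gt0 //.
  exact: aseq_div_gt0.
exact: dvdn_aseq_div_inverse.
Qed.

Lemma eq1_parity_aseq_odd n : odd d -> 0 < n ->
  eq1_parity r k t (b n) = eq1_parity r k t (b 1).
Proof.
by move=> odd_d; elim: n => // [[|n IHn _]] //; rewrite eq1_parity_aseqS // odd_d IHn.
Qed.

End Inverse.
End GeometricSequence.

Lemma eq1_parity1 r k t : t < k -> k %| t + 1 -> eq1_parity r k t 1 = false.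
Proof.
move=> t_lt_k k_dvd; have k_eq : t + 1 = k.
  by apply/eqP; rewrite eqn_leq addn1 t_lt_k dvdn_leq // -addn1.
by rewrite /eq1_parity mul1n k_eq divnn (leq_ltn_trans (leq0n t) t_lt_k).
Qed.

Theorem theorem1p7 (a r : nat) (ha : 0 < a) (hr : 2 <= r) :
  let d := gcdn (a + 1) (r - 1) in
  let G := fun n => Gamma (aseq a r n) (aseq a r n.+1) in
  (odd d ->
     (~~ (a + 1 %| r - 1) -> forall n, 1 <= n -> G n = G 1) /\
     ((a + 1 %| r - 1) -> G 1 = 1 /\ forall n, 2 <= n -> G n = 2)) /\
  (~~ odd d -> forall n, 2 <= n -> G n \in [:: 1; 2] /\ G n.+1 != G n).
Proof.
move=> d G; have [t t_lt_k k_dvd] := aseq_inverse_exists a hr.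
have G_parity := Gamma_aseq_parity hr t_lt_k k_dvd.
split=> [odd_d | even_d n n_gt1].
  have parity_const := eq1_parity_aseq_odd hr k_dvd odd_d.
  split=> [ndvd n n_gt0 | dvd].
    have b1_gt1 : 1 < aseq a r 1 %/ d.
      by rewrite ltn_neqAle eq_sym aseq_div1_eq1 ndvd aseq_div_gt0.
    have bn_gt1 : 1 < aseq a r n %/ d.
      by case: n n_gt0 {G} => [|[|n]] // _; rewrite aseq_div_gt1.
    by rewrite /G !G_parity // parity_const.
  have b1_eq1 : aseq a r 1 %/ d = 1 by apply/eqP; rewrite aseq_div1_eq1.
  split; first by rewrite /G (Gamma_aseq hr k_dvd) // b1_eq1 eq1_solvable1n.
  move=> n n_gt1; have n_gt0 := ltnW n_gt1.
  rewrite /G G_parity ?aseq_div_gt1 // parity_const //.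
  by move: k_dvd; rewrite b1_eq1 mul1n => /(eq1_parity1 r t_lt_k) ->.
split; first by rewrite /G /Gamma; case: ifP.
have n_gt0 := ltnW n_gt1.
rewrite /G !G_parity ?aseq_div_gt1 //.
by rewrite (eq1_parity_aseqS hr k_dvd) // even_d; case: eq1_parity.
Qed.
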